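(* Let $\langle A, \leq, \otimes, \ominus, \mathbf{1}\rangle$ be a residuated partially ordered monoid with bottom element $\bot$, let $k\geq1$ and $a = a_1\ldots a_k$, $b = b_1\ldots b_k \in Lex_k(A)$. If $\delta(a,b) < \gamma(a,b)$, then the residuation $a \ominus_k b$ of $a$ by $b$ in $\langle Lex_k(A), \leq_k, \otimes^k, \mathbf{1}^k\rangle$ exists and equals $$(a_1 \ominus b_1) \ldots (a_{\delta(a,b)} \ominus b_{\delta(a,b)})\,\Big(\bigvee Lex_{k-\delta(a,b)}(A)\Big),$$ that is, this tuple $r$ lies in $Lex_k(A)$ and for every $c \in Lex_k(A)$, $b \otimes^k c \leq_k a$ iff $c \leq_k r$.
   Context: A residuated partially ordered monoid $\langle A, \leq, \otimes, \ominus, \mathbf{1}\rangle$ consists of a partial order $\langle A,\leq\rangle$, a commutative monoid $\langle A,\otimes,\mathbf{1}\rangle$, and a binary operation $\ominus$ with $b \otimes c \leq a$ iff $c \leq a \ominus b$ for all $a,b,c\in A$. $a<b$ means $a\leq b$, $a\neq b$. $I(A) = \{c \in A \mid \forall a,b \in A.\ a \otimes c = b \otimes c \Rightarrow a = b\}$, $C(A)=A\setminus I(A)$. $Lex_k(A)\subseteq A^k$: $Lex_1(A) = A$, $Lex_{k+1}(A) = I(A)\, Lex_k(A) \cup C(A)\{\bot\}^k$ (concatenations of sequences; $\{\bot\}^k$ the singleton of $k$ copies of $\bot$). The order $\leq_k$: $\leq_1=\leq$, and for $k\geq2$, $a_1 \ldots a_k \leq_k b_1 \ldots b_k$ iff $a_1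 < b_1$, or $a_1 = b_1$ and $a_2 \ldots a_k \leq_{k-1} b_2 \ldots b_k$. $\otimes^k$ is componentwise, $\mathbf{1}^k=\mathbf{1}\ldots\mathbf{1}$. $\bigvee Lex_n(A)$ denotes the greatest element of $Lex_n(A)$ with respect to $\leq_n$ (the empty sequence when $n=0$). For $a,b\in Lex_k(A)$: $\gamma(a,b) = \min\{ i \mid a_i \ominus b_i \in C(A)\}$ and $\delta(a,b) = \min\{ i \mid (a_i \ominus b_i) \otimes b_i < a_i\}$, each equal to $k+1$ if the set is empty. *)

From Stdlib Require Import List Arith.
Import ListNotations.

Section RPOM.
Variables (A : Type) (le : A -> A -> Prop) (mul res : A -> A -> A) (one : A).

Definition lt (a b : A) : Prop := le a b /\ a <> b.

(* residuated partially ordered (commutative) monoid; res a b = a (-) b *)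
Definition residuated_pomonoid : Prop :=
  (forall a, le a a) /\
  (forall a b, le a b -> le b a -> a = b) /\
  (forall a b c, le a b -> le b c -> le a c) /\
  (forall a b c, mul a (mul b c) = mul (mul a b) c) /\
  (forall a b, mul a b = mul b a) /\
  (forall a, mul one a = a) /\
  (forall a b c, le (mul b c) a <-> le c (res a b)).

Definition is_bottom (bot : A) : Prop := forall a, le bot a.

Definition inI (c : A) : Prop := forall a b, mul a c = mul b c -> a = b.
Definition inC (c : A) : Prop := ~ inI c.

Variable bot : A.

(* Lex_n(A) as a predicate on sequences; Lex_0 = {empty sequence},
   so that Lex_1 = A and Lex_(n+1) = I(A) Lex_n  \cup  C(A) {bot}^n *)
Fixpoint Lex (n : nat) (s : list A) : Prop :=
  match n with
  | 0 => s = []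
  | S m => exists x t, s = x :: t /\
             ((inI x /\ Lex m t) \/ (inC x /\ t = repeat bot m))
  end.

Fixpoint lexle (s t : list A) : Prop :=
  match s, t with
  | [], [] => True
  | [x], [y] => le x y
  | x :: s', y :: t' => lt x y \/ (x = y /\ lexle s' t')
  | _, _ => False
  end.

Fixpoint zipw (f : A -> A -> A) (s t : list A) : list A :=
  match s, t with
  | x :: s', y :: t' => f x y :: zipw f s' t'
  | _, _ => []
  end.

Definition mulk (s t : list A) : list A := zipw mul s t.

Definition is_greatest_Lex (n : nat) (g : list A) : Prop :=
  Lex n g /\ forall s, Lex n s -> lexle s g.

(* i = min { i in 1..k | P a_i b_i }, or k+1 if no such i  (1-based) *)
Definition is_first_index (P : A -> A -> Prop) (k : nat) (a b : list A)
  (i : nat) : Prop :=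
  1 <= i <= S k /\
  (forall j, 1 <= j < i -> ~ P (nth (j - 1) a bot) (nth (j - 1) b bot)) /\
  (i <= k -> P (nth (i - 1) a bot) (nth (i - 1) b bot)).

Definition is_gamma (k : nat) (a b : list A) (i : nat) : Prop :=
  is_first_index (fun x y => inC (res x y)) k a b i.
Definition is_delta (k : nat) (a b : list A) (i : nat) : Prop :=
  is_first_index (fun x y => lt (mul (res x y) y) x) k a b i.

End RPOM.

Arguments lt {A}. Arguments residuated_pomonoid {A}. Arguments is_bottom {A}.
Arguments inI {A}. Arguments inC {A}. Arguments Lex {A}. Arguments lexle {A}.
Arguments zipw {A}. Arguments mulk {A}. Arguments is_greatest_Lex {A}.
Arguments is_first_index {A}. Arguments is_gamma {A}. Arguments is_delta {A}.

(* Write u_i = a_i (-) b_i.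
   Before position delta we have b_i (x) u_i = a_i, so comparing b (x) c with a
   lexicographically is the same as comparing c with u position by position:
   the one delicate case, c_i < u_i with b_i (x) c_i = a_i, is impossible when
   b_i is cancellative, and when it is not, the tail of b is bottom and the
   tail comparison holds anyway.  At position delta, b_i (x) u_i < a_i, so
   c_i <= u_i alone decides and the later positions are unconstrained, whence
   the greatest element of Lex_(k-delta).  Residuals before gamma are
   cancellative, so the resulting tuple lies in Lex_k. *)

From Stdlib Require Import List Arith Lia Classical.
Import ListNotations.

Lemma length_zipw {A : Type} (f : A -> A -> A) s t :
  length (zipw f s t) = min (length s) (length t).
Proof.
  revert t; induction s as [|x s IH]; intros [|y t]; simpl; auto.
Qed.

Section LexOrder.
Context {A : Type} {le : A -> A -> Prop}.
Hypothesis le_refl : forall a, le a a.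

Lemma lexle_cons x y s t : length s = length t ->
  lexle le (x :: s) (y :: t) <-> lt le x y \/ (x = y /\ lexle le s t).
Proof.
  intros Hlen; destruct s as [|x' s], t as [|y' t]; try discriminate.
  - simpl; split.
    + intros Hxy; destruct (classic (x = y)); [right | left]; unfold lt; tauto.
    + intros [[Hxy _] | [-> _]]; auto.
  - simpl; tauto.
Qed.

Lemma lexle_refl s : lexle le s s.
Proof.
  induction s as [|x s IH]; [exact I|].
  apply lexle_cons; auto.
Qed.

Lemma repeat_bottom_lexle bot : is_bottom le bot ->
  forall s, lexle le (repeat bot (length s)) s.
Proof.
  intros Hbot; induction s as [|x s IH]; [exact I|].
  apply lexle_cons; [apply repeat_length|].
  destruct (classic (bot = x)); [right | left; split]; auto.
Qed.

End LexOrder.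

Section LexSets.
Context {A : Type} {mul : A -> A -> A} {bot : A}.

Lemma Lex_length {n s} : Lex mul bot n s -> length s = n.
Proof.
  revert s; induction n as [|n IH]; simpl; intros s Hs.
  - now subst.
  - destruct Hs as (x & t & -> & [[_ Ht] | [_ ->]]); simpl.
    + now rewrite (IH t Ht).
    + now rewrite repeat_length.
Qed.

Lemma Lex_cons_inv {m x s} : Lex mul bot (S m) (x :: s) ->
  (inI mul x /\ Lex mul bot m s) \/ (inC mul x /\ s = repeat bot m).
Proof. intros (x' & s' & E & H); now injection E as -> ->. Qed.

Lemma Lex_repeat m : Lex mul bot m (repeat bot m).
Proof.
  induction m as [|m IH]; [reflexivity|].
  exists bot, (repeat bot m); split; [reflexivity|].
  destruct (classic (inI mul bot)); [left | right]; auto.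
Qed.

Lemma Lex_tail {m x s} : Lex mul bot (S m) (x :: s) -> Lex mul bot m s.
Proof.
  intros H; destruct (Lex_cons_inv H) as [[_ Hs] | [_ ->]]; auto using Lex_repeat.
Qed.

Lemma Lex_zipw_prefix (f : A -> A -> A) d : forall n a b t,
  length a = n -> length b = n -> d <= n ->
  (forall j, j < d -> inI mul (f (nth j a bot) (nth j b bot))) ->
  Lex mul bot (n - d) t ->
  Lex mul bot n (zipw f (firstn d a) (firstn d b) ++ t).
Proof.
  induction d as [|d IH]; intros n a b t Ha Hb Hd HI Ht.
  - now rewrite Nat.sub_0_r in Ht.
  - destruct n as [|n]; [lia|].
    destruct a as [|x a], b as [|y b]; try discriminate.
    injection Ha as Ha; injection Hb as Hb.
    exists (f x y), (zipw f (firstn d a) (firstn d b) ++ t); split; [reflexivity|].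
    left; split.
    + exact (HI 0 ltac:(lia)).
    + apply IH; [exact Ha | exact Hb | lia | | exact Ht].
      intros j Hj; exact (HI (S j) ltac:(lia)).
Qed.

End LexSets.

Section Residuated.
Context {A : Type} {le : A -> A -> Prop} {mul res : A -> A -> A} {one bot : A}.
Hypothesis RP : residuated_pomonoid le mul res one.
Hypothesis bot_least : is_bottom le bot.

Let le_refl : forall a, le a a.
Proof. now destruct RP. Qed.
Let le_antisym : forall a b, le a b -> le b a -> a = b.
Proof. now destruct RP as (_ & H & _). Qed.
Let le_trans : forall a b c, le a b -> le b c -> le a c.
Proof. now destruct RP as (_ & _ & H & _). Qed.
Let mulC : forall a b, mul a b = mul b a.
Proof. now destruct RP as (_ & _ & _ & _ & H & _). Qed.
Let residuation : forall a b c, le (mul b c) a <-> le c (res a b).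
Proof. now destruct RP as (_ & _ & _ & _ & _ & _ & H). Qed.

Lemma mul_bot_l x : mul bot x = bot.
Proof.
  apply le_antisym; [|apply bot_least].
  rewrite mulC; apply residuation, bot_least.
Qed.

Lemma le_res_bot x : le x (res bot bot).
Proof. apply residuation; rewrite mul_bot_l; apply le_refl. Qed.

Lemma mul_le_mono_l y z u : le z u -> le (mul y z) (mul y u).
Proof.
  intros Hzu; apply residuation.
  apply le_trans with u; [exact Hzu|].
  apply residuation, le_refl.
Qed.

Lemma mul_res_le x y : le (mul (res x y) y) x.
Proof. rewrite mulC; apply residuation, le_refl. Qed.

Lemma mul_res_eq_of_not_lt x y :
  ~ lt le (mul (res x y) y) x -> mul (res x y) y = x.
Proof.
  intros H; apply NNPP; intros Hne.
  apply H; split; [apply mul_res_le | exact Hne].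
Qed.

Lemma mulk_repeat_bot_l {m c} :
  length c = m -> mulk mul (repeat bot m) c = repeat bot m.
Proof.
  intros <-; induction c as [|z c IH]; [reflexivity|].
  unfold mulk in *; simpl; now rewrite mul_bot_l, IH.
Qed.

(* The witness starts with the top element res bot bot, followed by the
   greatest element of Lex_m, or by bottoms when the top is not cancellative. *)
Lemma Lex_greatest_exists n : exists g, is_greatest_Lex le mul bot n g.
Proof.
  set (T := res bot bot).
  assert (lexle_top_cons : forall x t g, length t = length g ->
            (x = T -> lexle le t g) -> lexle le (x :: t) (T :: g)).
  { intros x t g Hlen Htail; apply (lexle_cons le_refl _ _ _ _ Hlen).
    destruct (classic (x = T)) as [E | Hne].
    - right; auto.
    - left; split; [apply le_res_bot | exact Hne]. }
  induction n as [|m [g [Hg Hmax]]].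
  - exists []; split; [reflexivity|]; intros s ->; exact I.
  - destruct (classic (inI mul T)) as [HI | HC].
    + exists (T :: g); split; [exists T, g; auto|].
      intros [|x t] Hs; [apply Lex_length in Hs; discriminate|].
      apply lexle_top_cons.
      * now rewrite (Lex_length (Lex_tail Hs)), (Lex_length Hg).
      * intros _; exact (Hmax t (Lex_tail Hs)).
    + exists (T :: repeat bot m); split; [exists T, (repeat bot m); auto|].
      intros [|x t] Hs; [apply Lex_length in Hs; discriminate|].
      apply lexle_top_cons.
      * now rewrite (Lex_length (Lex_tail Hs)), repeat_length.
      * intros ->; destruct (Lex_cons_inv Hs) as [[HI _] | [_ ->]];
          [contradiction | apply lexle_refl, le_refl].
Qed.

Lemma lexle_cons_residual_strict x y z s t c top :
  lt le (mul (res x y) y) x ->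
  length s = length t -> length c = length top -> lexle le c top ->
  lexle le (mul y z :: s) (x :: t) <-> lexle le (z :: c) (res x y :: top).
Proof.
  intros [Hle Hne] Hst Hctop Hc.
  rewrite (lexle_cons le_refl _ _ _ _ Hst), (lexle_cons le_refl _ _ _ _ Hctop).
  split.
  - intros Hyz.
    assert (Hz : le z (res x y)).
    { apply residuation; destruct Hyz as [[H _] | [-> _]]; auto. }
    destruct (classic (z = res x y)); [right | left; split]; auto.
  - intros Hz.
    assert (Hzu : le z (res x y)) by (destruct Hz as [[H _] | [-> _]]; auto).
    left; split; [now apply residuation|].
    intros E; apply Hne, le_antisym; [exact Hle|].
    rewrite <- E at 1; rewrite (mulC (res x y)).
    now apply mul_le_mono_l.
Qed.

Lemma lexle_cons_residual_exact x y z s t c r :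
  mul (res x y) y = x -> (~ inI mul y -> lexle le s t) ->
  length s = length t -> length c = length r ->
  (lexle le s t <-> lexle le c r) ->
  lexle le (mul y z :: s) (x :: t) <-> lexle le (z :: c) (res x y :: r).
Proof.
  intros Hexact Hcancel Hst Hcr Htail.
  assert (Hyu : mul y (res x y) = x) by now rewrite mulC.
  rewrite (lexle_cons le_refl _ _ _ _ Hst), (lexle_cons le_refl _ _ _ _ Hcr).
  split.
  - intros Hyz.
    assert (Hz : le z (res x y)).
    { apply residuation; destruct Hyz as [[H _] | [-> _]]; auto. }
    destruct (classic (z = res x y)) as [-> | Hne].
    + right; split; [reflexivity|].
      destruct Hyz as [[_ Hne] | [_ H]]; [contradiction | now apply Htail].
    + left; split; auto.
  - intros [[Hz Hne] | [-> H]].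
    + destruct (classic (mul y z = x)) as [E | Hne'].
      * right; split; [exact E|]; apply Hcancel.
        intros HI; apply Hne, HI.
        now rewrite (mulC z), (mulC (res x y)), E.
      * left; split; [now apply residuation | exact Hne'].
    + right; split; [exact Hyu | now apply Htail].
Qed.

Lemma lexle_mulk_residual e : forall n a b c top,
  length a = n -> Lex mul bot n b -> Lex mul bot n c -> e < n ->
  (forall j, j < e ->
     mul (res (nth j a bot) (nth j b bot)) (nth j b bot) = nth j a bot) ->
  lt le (mul (res (nth e a bot) (nth e b bot)) (nth e b bot)) (nth e a bot) ->
  is_greatest_Lex le mul bot (n - S e) top ->
  lexle le (mulk mul b c) a <->
  lexle le c (zipw res (firstn (S e) a) (firstn (S e) b) ++ top).
Proof.
  induction e as [|e IH]; intros n a b c top Ha Hb Hc He Hexact Hstrict [Htop Hmax];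
    (destruct n as [|m]; [lia|]);
    (destruct a as [|x a]; [discriminate|]); injection Ha as Ha;
    (destruct b as [|y b]; [apply Lex_length in Hb; discriminate|]);
    (destruct c as [|z c]; [apply Lex_length in Hc; discriminate|]);
    change (mulk mul (y :: b) (z :: c)) with (mul y z :: mulk mul b c);
    rewrite !firstn_cons, ?firstn_O; cbn [zipw app];
    assert (Hmulk : length (mulk mul b c) = length a)
      by (unfold mulk; rewrite length_zipw, (Lex_length (Lex_tail Hb)),
            (Lex_length (Lex_tail Hc)); lia).
  - replace (S m - 1) with m in Htop, Hmax by lia.
    apply lexle_cons_residual_strict; auto.
    + now rewrite (Lex_length (Lex_tail Hc)), (Lex_length Htop).
    + exact (Hmax c (Lex_tail Hc)).
  - apply lexle_cons_residual_exact; auto.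
    + exact (Hexact 0 ltac:(lia)).
    + intros Hy; destruct (Lex_cons_inv Hb) as [[HI _] | [_ ->]]; [contradiction|].
      rewrite (mulk_repeat_bot_l (Lex_length (Lex_tail Hc))), <- Ha.
      now apply repeat_bottom_lexle.
    + rewrite (Lex_length (Lex_tail Hc)), length_app, length_zipw, !length_firstn,
        (Lex_length Htop), (Lex_length (Lex_tail Hb)); lia.
    + apply (IH m); eauto using Lex_tail.
      * lia.
      * intros j Hj; exact (Hexact (S j) ltac:(lia)).
      * split; assumption.
Qed.

End Residuated.

Lemma first_index_before {A : Type} {bot : A} {P k a b i} :
  is_first_index bot P k a b i ->
  forall j, S j < i -> ~ P (nth j a bot) (nth j b bot).
Proof.
  intros (_ & Hbefore & _) j Hj.
  specialize (Hbefore (S j) ltac:(lia)).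
  now rewrite Nat.sub_succ, Nat.sub_0_r in Hbefore.
Qed.

Lemma first_index_at {A : Type} {bot : A} {P k a b e} :
  is_first_index bot P k a b (S e) -> e < k -> P (nth e a bot) (nth e b bot).
Proof.
  intros (_ & _ & Hat) He.
  specialize (Hat ltac:(lia)); now rewrite Nat.sub_succ, Nat.sub_0_r in Hat.
Qed.

Theorem proposition3 (A : Type) (le : A -> A -> Prop) (mul res : A -> A -> A)
  (one bot : A) :
  residuated_pomonoid le mul res one ->
  is_bottom le bot ->
  forall (k : nat) (a b : list A) (d g : nat),
  1 <= k ->
  Lex mul bot k a -> Lex mul bot k b ->
  is_delta le mul res bot k a b d ->
  is_gamma mul res bot k a b g ->
  d < g ->
  (exists top, is_greatest_Lex le mul bot (k - d) top) /\
  (forall top, is_greatest_Lex le mul bot (k - d) top ->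
     let r := zipw res (firstn d a) (firstn d b) ++ top in
     Lex mul bot k r /\
     (forall c, Lex mul bot k c ->
        (lexle le (mulk mul b c) a <-> lexle le c r))).
Proof.
  intros RP Hbot k a b d g _ Ha Hb Hdelta Hgamma Hdg.
  split; [exact (Lex_greatest_exists RP Hbot (k - d))|].
  intros top Htop r.
  destruct d as [|e]; [destruct Hdelta; lia|].
  assert (He : e < k) by (destruct Hgamma; lia).
  assert (Hexact : forall j, j < e ->
            mul (res (nth j a bot) (nth j b bot)) (nth j b bot) = nth j a bot).
  { intros j Hj; apply (mul_res_eq_of_not_lt RP).
    apply (first_index_before Hdelta j); lia. }
  assert (Hcancel : forall j, j < S e -> inI mul (res (nth j a bot) (nth j b bot))).
  { intros j Hj; apply NNPP, (first_index_before Hgamma j); lia. }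
  split.
  - apply Lex_zipw_prefix; [exact (Lex_length Ha) | exact (Lex_length Hb) | lia
                           | exact Hcancel | apply Htop].
  - intros c Hc.
    exact (lexle_mulk_residual RP Hbot e k a b c top (Lex_length Ha) Hb Hc He
             Hexact (first_index_at Hdelta He) Htop).
Qed.
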